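(* Assume $C\le1$. Let $N,q,L\in\mathbb{N}_{\ge1}$ and $0<\varepsilon\le\frac1{2NL}$ with $$q\ge9\max\{1,A\}\quad\text{and}\quad N\ge\max\Big\{\frac4A,\ \frac{8(n+1)n\cdot2^nDA^{n-1}}{3C^n}\Big\}.$$ If $s\in S=\frac1{NL}\{0,\dots,L-1\}^n$ satisfies $H_{\mathrm{grid}}(\varepsilon)\cap G(s)=\emptyset$, then $$\frac1N\le\frac A4\quad\text{and}\quad\frac{|G(s)\setminus H_{\mathrm{bound}}|}{|G(s)|}\ge1-\frac1{4(n+1)}.$$
   Context: An $n$-dimensional infrastructure consists of a full-rank lattice $\Lambda\subset\mathbb{R}^n$, a finite non-empty set $X$, an injective map $d:X\to\mathbb{R}^n/\Lambda$, and a set $\mathrm{fRep}\subseteq X\times\mathbb{R}^n$ with $X\times\{0\}\subseteq\mathrm{fRep}$ such that $\Phi:\mathrm{fRep}\to\mathbb{R}^n/\Lambda$, $(x,t)\mapsto d(x)+t$, is a bijection. Let $\pi:\mathbb{R}^n\to\mathbb{R}^n/\Lambda$ be the projection, $\hat X=\pi^{-1}(d(X))$, and for $\hat x\in\hat X$ let $\hat V_{\hat x}=\{\hat x+t:(d^{-1}(\pi(\hat x)),t)\in\mathrm{fRep}\}$; these sets partition $\mathbb{R}^n$. Standing assumptions: the infrastructure is cornered (for each $\hat x$, $\hat x\in\hat V_{\hat x}$ and $\{r:\hat x\le r\le t\}\subseteq\hat V_{\hat x}$ for all $t\in\hat V_{\hat x}$, componentwise order); (A1) there is $A>0$ with $\hat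 V_{\hat x}\subseteq\hat x+[0,A]^n$ for all $\hat x$; (A2) there are $C,D>0$ such that $(r+[0,C]^n)\cap\hat X$ has at most $D$ elements for every $r\in\mathbb{R}^n$. $G(s)=\{s+\frac1Nv:v\in\{0,\dots,qN-1\}^n\}$. $H=\bigcup_{\hat x}\partial\hat V_{\hat x}$ (topological boundaries), $H_{\mathrm{bound}}=(-\frac1N,0]^n+H$, $\mathbb{N}=\{0,1,2,\dots\}$, and $H_{\mathrm{grid}}(\varepsilon)=\bigcup_{\hat x\in\hat X}\big((\frac1N\mathbb{N}^n+\partial\hat V_{\hat x})\cap\overline{\hat V_{\hat x}}\big)+[-\varepsilon,\varepsilon]^n$. *)

(* R^n is rendered as 'rV[R]_n with its
   canonical (normed) topology; R^n/Lambda is handled through representatives. *)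
From HB Require Import structures.
From mathcomp Require Import all_boot all_order all_algebra.
From mathcomp Require Import all_classical all_reals all_analysis.
Set Implicit Arguments. Unset Strict Implicit. Unset Printing Implicit Defensive.
Import Order.TTheory GRing.Theory Num.Theory.
Import numFieldNormedType.Exports.
Local Open Scope classical_set_scope.
Local Open Scope ring_scope.

Section Infrastructure.
Variables (R : realType) (n : nat).
Local Notation vec := 'rV[R]_n.

(* The lattice Lambda = Z^n B (rows of B are a basis). *)
Definition in_lattice (B : 'M[R]_n) (v : vec) : Prop :=
  exists k : 'I_n -> int, v = (\row_i (k i)%:~R) *m B.

Definition vle (x y : vec) : Prop := forall i, x 0 i <= y 0 i.

Definition boundary (A : set vec) : set vec := closure A `\` interior A.

Variables (X : finType) (B : 'M[R]_n) (d : X -> vec) (fRep : set (X * vec)).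

(* n-dimensional infrastructure: Lambda full rank, X nonempty finite,
   d : X -> R^n/Lambda injective (d given by representatives),
   X x {0} subset of fRep, Phi : (x,t) |-> d(x)+t mod Lambda bijective. *)
Definition is_infrastructure : Prop :=
  [/\ B \in unitmx, (0 < #|X|)%N,
      (forall x y, in_lattice B (d x - d y) -> x = y),
      (forall x, fRep (x, 0)) &
    [/\ 
      (forall p p', fRep p -> fRep p' ->
          in_lattice B ((d p.1 + p.2) - (d p'.1 + p'.2)) -> p = p')
    & (forall y, exists2 p, fRep p & in_lattice B ((d p.1 + p.2) - y))]].

(* \hat X = pi^{-1}(d(X)) *)
Definition Xhat : set vec := [set y | exists x, in_lattice B (y - d x)].

Definition Vhat (xh : vec) : set vec :=
  [set v | exists x t, [/\ in_lattice B (xh - d x), fRep (x, t) & v = xh + t]].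

Definition cornered : Prop :=
  forall xh, Xhat xh ->
    Vhat xh xh /\
    (forall t, Vhat xh t -> forall r, vle xh r -> vle r t -> Vhat xh r).

Definition assumptionA1 (A : R) : Prop :=
  0 < A /\ forall xh, Xhat xh -> forall v, Vhat xh v ->
    forall i, 0 <= v 0 i - xh 0 i <= A.

Definition assumptionA2 (C D : R) : Prop :=
  [/\ 0 < C, 0 < D &
    forall (r : vec) (s : seq vec), uniq s ->
      (forall y, y \in s -> Xhat y /\ forall i, 0 <= y 0 i - r 0 i <= C) ->
      (size s)%:R <= D].

Definition Hset : set vec := \bigcup_(xh in Xhat) boundary (Vhat xh).

Definition Hbound (N : nat) : set vec :=
  [set v | exists (u h : vec), [/\ forall i, - (N%:R)^-1 < u 0 i <= 0, Hset h & v = u + h]].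

Definition Hgrid (N : nat) (eps : R) : set vec :=
  [set v | exists (xh w e : 'rV[R]_n),
     [/\ Xhat xh,
         (exists (m : 'I_n -> nat) b,
             boundary (Vhat xh) b /\ w = (N%:R)^-1 *: (\row_i (m i)%:R) + b),
         closure (Vhat xh) w,
         (forall i, - eps <= e 0 i <= eps) & v = w + e]].

End Infrastructure.

Section Grid.
Variables (R : realType) (n : nat).

Definition gridpt (N q : nat) (s : 'rV[R]_n) (v : {ffun 'I_n -> 'I_(q * N)}) :=
  s + (N%:R)^-1 *: (\row_i ((v i : nat)%:R)).

Definition Gset (N q : nat) (s : 'rV[R]_n) : set 'rV[R]_n :=
  [set y | exists v : {ffun 'I_n -> 'I_(q * N)}, y = gridpt s v].

Definition Gseq (N q : nat) (s : 'rV[R]_n) : seq 'rV[R]_n :=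
  [seq gridpt s v | v <- enum {ffun 'I_n -> 'I_(q * N)}].

Definition cardG (N q : nat) (s : 'rV[R]_n) : nat := size (undup (Gseq N q s)).

Definition cardG_out (P : set 'rV[R]_n) (N q : nat) (s : 'rV[R]_n) : nat :=
  size (undup [seq y <- Gseq N q s | `[< ~ P y >]]).

End Grid.

From HB Require Import structures.
From mathcomp Require Import all_boot all_order all_algebra.
From mathcomp Require Import all_classical all_reals all_analysis.
From mathcomp Require Import ring lra.
Set Implicit Arguments. Unset Strict Implicit. Unset Printing Implicit Defensive.
Import Order.TTheory GRing.Theory Num.Theory.
Import numFieldNormedType.Exports.
Local Open Scope classical_set_scope.
Local Open Scope ring_scope.

(* A point [g] of [H_bound] lies less than [1/N] below, coordinatewise, a boundary
   point [h] of some cell.  Pick [t] strictly between [h] and [g + 1/N] and let [V y]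
   be the cell containing [t].  Since cells are cornered, the open box between [y]
   and [t] lies in [V y], so [h] can only be a boundary point if [h_i <= y_i] for
   some [i].  With (A1) this pins the corner [y] within [1/N] of [g] in coordinate
   [i] and to a window of width [A + 1/N] in the others, so each corner accounts for
   at most [n (AN + 2)^(n-1)] grid points of [H_bound].  These corners lie in a box
   of side [q + A], which (A2) covers by [((q + A)/C + 1)^n] cubes of side [C]
   containing at most [D] corners each.  The choice of [q] and [N] makes the
   resulting bound at most [(qN)^n / (4(n+1))], whereas [|G(s)| = (qN)^n]. *)

Lemma count_enum_card (T : finType) (p : pred T) : count p (enum T) = #|p|.
Proof.
rewrite cardE -size_filter /enum_mem -filter_predI.
by congr size; apply: eq_filter => x /=; rewrite andbT.
Qed.

Lemma card_ffun_forall (n M : nat) (F : 'I_n -> pred 'I_M) :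
  #|[pred v : {ffun 'I_n -> 'I_M} | [forall j, F j (v j)]]| = (\prod_(j < n) #|F j|)%N.
Proof.
have -> : (\prod_(j < n) #|F j| = foldr muln 1 [seq #|F j| | j : 'I_n])%N.
  by rewrite foldrE big_map big_enum.
by rewrite -card_family; apply: eq_card => v; rewrite !inE.
Qed.

Lemma count_has_le_sum (T U : Type) (l : seq T) (s : seq U) (Q : T -> U -> bool) :
  (count (fun x => has (Q x) s) l <= \sum_(u <- s) count (Q^~ u) l)%N.
Proof.
elim: l => [|x l IH]; first by rewrite big1.
rewrite /= big_split /= leq_add //.
by elim: s {IH} => [|u s IHs]; rewrite ?big_nil ?big_cons //=; case: (Q x u).
Qed.

Lemma card_nat_itv_le (R : archiRealFieldType) (M l : nat) (b w : R) :
  w <= l%:R -> (#|[pred k : 'I_M | (b < (k : nat)%:R <= b + w)%R]| <= l)%N.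
Proof.
move=> wl.
pose c := if 0 <= b then (Num.truncn b).+1 else 0%N.
have c_le k : b < k%:R -> (c <= k)%N.
  by rewrite /c; case: ifP => // b0; rewrite truncn_lt_nat.
have gt_b : b < c%:R.
  by rewrite /c; case: ifP => b0; [exact: truncnS_gt | rewrite ltNge b0].
rewrite cardE -(size_map val) -(size_iota c l).
apply: uniq_leq_size; first by rewrite (map_inj_uniq val_inj) enum_uniq.
move=> _ /mapP[k + ->]; rewrite mem_enum inE => /andP[bk kb].
by rewrite mem_iota (c_le _ bk) /= -(ltr_nat R) natrD; lra.
Qed.

Section Arithmetic.
Variable R : realFieldType.

Lemma cubes_per_side_le (q A C : R) : 0 < C -> C <= 1 -> 9 * Num.max 1 A <= q ->
  (q + A) / C + 1 <= 11 / 9 * q / C.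
Proof.
move=> C0 C1 Hq; have : 1 <= Num.max 1 A by rewrite le_max lexx.
have : A <= Num.max 1 A by rewrite le_max lexx orbT.
by rewrite ler_pdivlMr // mulrDl divfK ?gt_eqF // mul1r; lra.
Qed.

(* The left-hand side is at most [(11/12)^n] times the right-hand side. *)
Lemma corner_count_arith (n : nat) (q N A C D k t : R) : (0 < n)%N ->
  0 < q -> 0 < N -> 0 < A -> 0 < C -> 0 <= D ->
  8 * n.+1%:R * n%:R * 2 ^+ n * D * A ^+ n.-1 / (3 * C ^+ n) <= N ->
  0 <= k <= 11 / 9 * q / C -> 0 <= t <= 3 / 2 * A * N ->
  k ^+ n * D * n%:R * t ^+ n.-1 <= (q * N) ^+ n / (4 * n.+1%:R).
Proof.
case: n => // m _ q0 N0 A0 C0 D0 /= HN /andP[k0 hk] /andP[t0 ht].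
set P := _ / _ in HN.
have Cm0 : C ^+ m.+1 != 0 by rewrite expf_neq0 // gt_eqF.
have DP : D * m.+1%:R * A ^+ m / C ^+ m.+1 = 3 * P / (8 * m.+2%:R * 2 ^+ m.+1).
  by rewrite /P; field; rewrite !expf_neq0 ?gt_eqF //; have := ler0n R m; lra.
have le_bounds : k ^+ m.+1 * D * m.+1%:R * t ^+ m <=
    (11 / 9 * q / C) ^+ m.+1 * D * m.+1%:R * (3 / 2 * A * N) ^+ m.
  have hk' : k ^+ m.+1 <= (11 / 9 * q / C) ^+ m.+1.
    by apply: lerXn2r; rewrite ?nnegrE //; lra.
  have ht' : t ^+ m <= (3 / 2 * A * N) ^+ m by apply: lerXn2r; rewrite ?nnegrE //; lra.
  by rewrite ler_pM ?ler_wpM2r ?mulr_ge0 ?exprn_ge0.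
apply: le_trans le_bounds _.
have -> : (11 / 9 * q / C) ^+ m.+1 * D * m.+1%:R * (3 / 2 * A * N) ^+ m =
    (11 / 9) ^+ m.+1 * (3 / 2) ^+ m * q ^+ m.+1 * N ^+ m * (D * m.+1%:R * A ^+ m / C ^+ m.+1).
  by rewrite expr_div_n !exprMn; field.
set c := (11 / 9 : R) ^+ m.+1 * (3 / 2) ^+ m.
have c0 : 0 < c by rewrite mulr_gt0 // exprn_gt0 //; lra.
have d0 : 0 < 8 * m.+2%:R * 2 ^+ m.+1 :> R by rewrite !mulr_gt0 ?exprn_gt0.
rewrite DP.
apply: (@le_trans _ _ (c * q ^+ m.+1 * N ^+ m * (3 * N / (8 * m.+2%:R * 2 ^+ m.+1)))).
  have cqN : 0 < c * q ^+ m.+1 * N ^+ m.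
    by apply: mulr_gt0; [apply: mulr_gt0 |]; rewrite ?exprn_gt0.
  by rewrite ler_pM2l //; apply: ler_wpM2r; [rewrite invr_ge0 ltW | lra].
have -> : c * q ^+ m.+1 * N ^+ m * (3 * N / (8 * m.+2%:R * 2 ^+ m.+1)) =
    (q * N) ^+ m.+1 / (4 * m.+2%:R) * (c * (3 / 2) / 2 ^+ m.+1).
  clearbody c; rewrite exprMn [N ^+ m.+1]exprS; field.
  by rewrite expf_neq0 //=; have := ler0n R m; lra.
rewrite ler_piMr //; first by rewrite divr_ge0 ?exprn_ge0 ?mulr_ge0 ?ltW.
rewrite ler_pdivrMr ?exprn_gt0 // mul1r /c -mulrA -exprSr -exprMn.
by apply: lerXn2r; rewrite ?nnegrE //; lra.
Qed.

End Arithmetic.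

Section Lattice.
Variables (R : realType) (n : nat) (B : 'M[R]_n).

Lemma in_latticeD u v : in_lattice B u -> in_lattice B v -> in_lattice B (u + v).
Proof.
move=> [k ->] [l ->]; exists (fun i => k i + l i).
by rewrite -mulmxDl; congr (_ *m _); apply/rowP => i; rewrite !mxE intrD.
Qed.

Lemma in_latticeN u : in_lattice B u -> in_lattice B (- u).
Proof.
move=> [k ->]; exists (fun i => - k i).
by rewrite -mulNmx; congr (_ *m _); apply/rowP => i; rewrite !mxE intrN.
Qed.

End Lattice.

Section Boxes.
Variables (R : realType) (n : nat).
Local Notation vec := 'rV[R]_n.

Lemma open_box_nbhs (a b h : vec) : (forall j, a 0 j < h 0 j < b 0 j) ->
  nbhs h [set z : vec | forall j, a 0 j < z 0 j < b 0 j].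
Proof.
move=> hab; exists (fun _ j => `]a 0 j, b 0 j[%classic).
  move=> i j; rewrite (ord1 i); apply: open_nbhs_nbhs; split; first exact: itv_open.
  by rewrite /= in_itv /=; exact: hab.
by move=> z /= zab j; have := zab 0 j; rewrite /= in_itv.
Qed.

(* Relates a point [g] of [H_bound] to the corner [y] of the cell containing a
   point just above [g] (see [Hbound_near_corner]). *)
Definition near_corner (N : nat) (A : R) (g y : vec) (i : 'I_n) : Prop :=
  g 0 i <= y 0 i < g 0 i + N%:R^-1 /\
  forall j, y 0 j < g 0 j + N%:R^-1 /\ g 0 j <= y 0 j + A.

End Boxes.

Section Cells.
Variables (R : realType) (n : nat) (X : finType) (B : 'M[R]_n) (d : X -> 'rV[R]_n).
Variable fRep : set (X * 'rV[R]_n).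
Local Notation vec := 'rV[R]_n.
Local Notation V := (Vhat B d fRep).
Hypothesis infra : is_infrastructure B d fRep.

Lemma Vhat_disjoint (xh yh r : vec) : V xh r -> V yh r -> xh = yh.
Proof.
case: infra => _ _ _ _ [inj _].
move=> [x1 [t1 [l1 f1 ->]]] [x2 [t2 [l2 f2 E]]].
have L : in_lattice B ((d (x1, t1).1 + (x1, t1).2) - (d (x2, t2).1 + (x2, t2).2)).
  have -> : d (x1, t1).1 + (x1, t1).2 - (d (x2, t2).1 + (x2, t2).2)
      = - (xh - d x1) + (yh - d x2) :> vec.
    apply/rowP => j; have := congr1 (fun v : vec => v 0 j) E.
    by rewrite !mxE /=; lra.
  by apply: in_latticeD => //; apply: in_latticeN.
by case: (inj _ _ f1 f2 L) => _ t12; move: E; rewrite t12 => /addIr.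
Qed.

Lemma Vhat_cover (t : vec) : exists2 y, Xhat B d y & V y t.
Proof.
case: infra => _ _ _ _ [_ surj].
have [[x u] fxu /in_latticeN] := surj t.
have -> : - (d (x, u).1 + (x, u).2 - t) = (t - u) - d x.
  by apply/rowP => j; rewrite !mxE /=; ring.
by move=> Lx; exists (t - u); [exists x | exists x, u; rewrite subrK].
Qed.

Hypothesis corn : cornered B d fRep.

Lemma open_box_sub_Vhat (y t : vec) : Xhat B d y -> V y t ->
  [set z : vec | forall j, y 0 j < z 0 j < t 0 j] `<=` V y.
Proof.
move=> Xy Vyt z yzt; apply: ((corn Xy).2 t Vyt z) => j.
  by have /andP[/ltW] := yzt j.
by have /andP[_ /ltW] := yzt j.
Qed.

(* Otherwise the open box between [y] and [t] would be a neighbourhood of [h]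
   inside the single cell [V y], so [h] would be interior to its own cell. *)
Lemma boundary_le_corner (xh h y t : vec) : boundary (V xh) h ->
  (forall j, h 0 j < t 0 j) -> Xhat B d y -> V y t -> exists i, h 0 i <= y 0 i.
Proof.
move=> [hcl hint] ht Xy Vyt; apply: contrapT => no_i.
have yh j : y 0 j < h 0 j by rewrite ltNge; apply/negP => hy; apply: no_i; exists j.
have h_box : nbhs h [set z : vec | forall j, y 0 j < z 0 j < t 0 j].
  by apply: open_box_nbhs => j; rewrite yh ht.
have [r [Vr box_r]] := hcl _ h_box.
apply: hint; rewrite (Vhat_disjoint Vr (open_box_sub_Vhat Xy Vyt box_r)).
exact: filterS (open_box_sub_Vhat Xy Vyt) h_box.
Qed.

Lemma Hbound_near_corner (N : nat) (A : R) (g : vec) : (0 < N)%N ->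
  assumptionA1 B d fRep A -> Hbound B d fRep N g ->
  exists2 y, Xhat B d y & exists i, near_corner N A g y i.
Proof.
move=> N0 [_ A1] [u [h [Hu [xh _ bd] ->]]].
have e0 : 0 < N%:R^-1 :> R by rewrite invr_gt0 ltr0n.
pose t : vec := \row_j ((h 0 j + (u 0 j + h 0 j + N%:R^-1)) / 2).
have ht j : h 0 j < t 0 j < u 0 j + h 0 j + N%:R^-1.
  by rewrite mxE; have /andP[? ?] := Hu j; apply/andP; split; lra.
have [y Xy Vyt] := Vhat_cover t.
have [i hy] := boundary_le_corner bd (fun j => (andP (ht j)).1) Xy Vyt.
have bounds j := (Hu j, ht j, A1 _ Xy _ Vyt j).
exists y => //; exists i; split => [|j]; rewrite !mxE.
  by have [[/andP[? ?] /andP[? ?]] /andP[? ?]] := bounds i; apply/andP; split; lra.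
by have [[/andP[? ?] /andP[? ?]] /andP[? ?]] := bounds j; split; lra.
Qed.

End Cells.

Section Grid.
Variables (R : realType) (n : nat) (N q : nat) (s : 'rV[R]_n).
Hypothesis N_gt0 : (0 < N)%N.
Local Notation F := {ffun 'I_n -> 'I_(q * N)}.

Lemma gridpt_coord (v : F) j : gridpt s v 0 j = s 0 j + (v j : nat)%:R / N%:R.
Proof. by rewrite /gridpt !mxE mulrC. Qed.

Lemma gridpt_inj : injective (gridpt s : F -> 'rV[R]_n).
Proof.
move=> v w /= E; apply/ffunP => j; apply: val_inj.
have := congr1 (fun z : 'rV[R]_n => z 0 j) E; rewrite /= !gridpt_coord => /addrI.
have N0 : (N%:R : R) != 0 by rewrite pnatr_eq0 -lt0n.
by move/(congr1 ( *%R^~ N%:R)); rewrite /= !divfK // => /eqP; rewrite eqr_nat => /eqP.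
Qed.

Lemma cardG_eq : cardG N q s = ((q * N) ^ n)%N.
Proof.
rewrite /cardG /Gseq undup_id; last by rewrite (map_inj_uniq gridpt_inj) enum_uniq.
by rewrite size_map -cardE card_ffun !card_ord.
Qed.

Lemma cardG_out_add_count (P : set 'rV[R]_n) :
  (cardG_out P N q s + count (fun v : F => `[< P (gridpt s v) >]) (enum F))%N =
  ((q * N) ^ n)%N.
Proof.
rewrite /cardG_out /Gseq undup_id; last first.
  by rewrite filter_uniq // (map_inj_uniq gridpt_inj) enum_uniq.
rewrite size_filter count_map (@eq_count _ _ (predC (fun v : F => `[< P (gridpt s v) >]))).
  by rewrite addnC count_predC -cardE card_ffun !card_ord.
by move=> v /=; rewrite asbool_neg.
Qed.

End Grid.

Section CornerCubes.
Variables (R : realType) (n : nat) (X : finType) (B : 'M[R]_n) (d : X -> 'rV[R]_n).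
Variables (C D : R).
Hypothesis A2 : assumptionA2 B d C D.
Local Notation vec := 'rV[R]_n.

(* Cover the box [a + [0, W]^n] by [K^n] cubes of side [C] and apply (A2) in each. *)
Lemma size_Xhat_box_le (a : vec) (W : R) (ys : seq vec) : uniq ys ->
  (forall y, y \in ys -> Xhat B d y /\ forall j, 0 <= y 0 j - a 0 j <= W) ->
  (size ys)%:R <= ((Num.truncn (W / C)).+1 ^ n)%:R * D.
Proof.
move=> ys_uniq ys_box; have [C0 D0 A2cube] := A2.
set K := (Num.truncn (W / C)).+1.
pose corner (c : {ffun 'I_n -> 'I_K}) : vec := \row_j (a 0 j + C * (c j : nat)%:R).
pose in_cube c (y : vec) : bool := `[< forall j, 0 <= y 0 j - corner c 0 j <= C >].
have cover y : y \in ys -> has (in_cube^~ y) (enum {ffun 'I_n -> 'I_K}).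
  move=> /ys_box[_ ya]; pose z j := (y 0 j - a 0 j) / C.
  have z0 j : 0 <= z j := divr_ge0 (andP (ya j)).1 (ltW C0).
  have zK j : (Num.truncn (z j) < K)%N.
    by rewrite ltnS le_truncn // ler_pM2r ?invr_gt0 // (andP (ya j)).2.
  apply/hasP; exists [ffun j => Ordinal (zK j)]; first exact: mem_enum.
  apply/asboolP => j; rewrite /corner !mxE ffunE /=.
  have /andP[tz zt] := truncn_itv (z0 j).
  have Cz : C * z j = y 0 j - a 0 j by rewrite mulrC divfK ?gt_eqF.
  by apply/andP; split; nra.
have cube_le c : (count (in_cube c) ys)%:R <= D.
  rewrite -size_filter; apply: A2cube (corner c) _ (filter_uniq _ ys_uniq) _.
  by move=> y; rewrite mem_filter => /andP[/asboolP yc /ys_box[]].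
have size_le : (size ys <= \sum_(c <- enum {ffun 'I_n -> 'I_K}) count (in_cube c) ys)%N.
  by rewrite -count_predT -(eq_in_count cover); exact: count_has_le_sum.
apply: le_trans (_ : \sum_(c <- enum {ffun 'I_n -> 'I_K}) D <= _).
  by apply: le_trans (ler_sum _ (fun c _ => cube_le c)); rewrite -natr_sum ler_nat.
by rewrite big_enum sumr_const card_ffun !card_ord mulr_natl.
Qed.

End CornerCubes.

Section Counting.
Variables (R : realType) (n : nat) (X : finType) (B : 'M[R]_n) (d : X -> 'rV[R]_n).
Variables (fRep : set (X * 'rV[R]_n)) (A C D : R) (N q : nat) (s : 'rV[R]_n).
Hypotheses (infra : is_infrastructure B d fRep) (corn : cornered B d fRep).
Hypotheses (N_gt0 : (0 < N)%N) (A1 : assumptionA1 B d fRep A) (A2 : assumptionA2 B d C D).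
Local Notation vec := 'rV[R]_n.
Local Notation F := {ffun 'I_n -> 'I_(q * N)}.
Local Notation T := (Num.truncn (A * N%:R)).+2.

(* Coordinate [j] of such a [v] ranges over a window of length [1] if [j = i]
   and of length [A N + 1] otherwise. *)
Lemma count_near_corner (y : vec) (i : 'I_n) :
  (count (fun v : F => `[< near_corner N A (gridpt s v) y i >]) (enum F) <= T ^ n.-1)%N.
Proof.
have N0 : (0 : R) < N%:R by rewrite ltr0n.
pose b j := N%:R * (y 0 j - s 0 j) - 1.
pose w j := if j == i then 1 else A * N%:R + 1.
pose I j := [pred k : 'I_(q * N) | (b j < (k : nat)%:R <= b j + w j)%R].
apply: (@leq_trans (count (fun v : F => [forall j, I j (v j)]) (enum F))).
  apply: sub_count => v /asboolP [/andP[gy yg] near]; apply/forallP => j.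
  have [yg' gy'] := near j; rewrite !gridpt_coord in gy yg yg' gy'.
  rewrite inE /b /w; set k := ((v j : nat)%:R : R).
  have kN : k / N%:R * N%:R = k by rewrite divfK // gt_eqF.
  have NN : N%:R^-1 * N%:R = 1 :> R by rewrite mulVf // gt_eqF.
  case: eqP => [ji | _]; last by apply/andP; split; nra.
  by rewrite -ji in gy yg; apply/andP; split; nra.
rewrite count_enum_card (card_ffun_forall I) (bigD1 i) //= -[(T ^ n.-1)%N]mul1n.
apply: leq_mul; first by apply: card_nat_itv_le; rewrite /w eqxx.
have -> : n.-1 = #|predC1 i| by rewrite cardC1 card_ord.
rewrite -prod_nat_const.
apply: leq_prod => j /negbTE ji; apply: card_nat_itv_le; rewrite /w ji.
by have := truncnS_gt (A * N%:R); rewrite -[T%:R]natr1; lra.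
Qed.

Definition in_Hbound (v : F) : bool := `[< Hbound B d fRep N (gridpt s v) >].

Definition near_corners (g : vec) : set vec :=
  [set y | Xhat B d y /\ exists i, near_corner N A g y i].

Definition corner_of (v : F) : vec := xget 0 (near_corners (gridpt s v)).

Lemma corner_ofP v : in_Hbound v -> near_corners (gridpt s v) (corner_of v).
Proof.
move=> /asboolP gH; apply: xgetPex.
by have [y Xy near] := Hbound_near_corner infra corn N_gt0 A1 gH; exists y.
Qed.

Definition corners : seq vec := undup [seq corner_of v | v <- enum F & in_Hbound v].

Lemma count_Hbound_le : (count in_Hbound (enum F) <= size corners * (n * T ^ n.-1))%N.
Proof.
pose near (v : F) (y : vec) (i : 'I_n) := `[< near_corner N A (gridpt s v) y i >].
apply: (@leq_trans
  (count (fun v => has (fun y => has (near v y) (enum 'I_n)) corners) (enum F))).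
  apply: sub_count => v vH; have [_ [i yi]] := corner_ofP vH.
  apply/hasP; exists (corner_of v).
    by rewrite mem_undup; apply/mapP; exists v; rewrite // mem_filter vH mem_enum.
  by apply/hasP; exists i; [rewrite mem_enum | apply/asboolP].
apply: leq_trans (count_has_le_sum _ _ _) _.
apply: (@leq_trans (\sum_(y <- corners) (n * T ^ n.-1)%N)).
  apply: leq_sum => y _; apply: leq_trans (count_has_le_sum _ _ _) _.
  apply: (@leq_trans (\sum_(i <- enum 'I_n) T ^ n.-1)%N).
    by apply: leq_sum => i _; apply: count_near_corner.
  by rewrite big_enum sum_nat_const card_ord.
by rewrite big_const_seq count_predT iter_addn_0 mulnC.
Qed.

Lemma corners_in_box y : y \in corners ->
  Xhat B d y /\ forall j, s 0 j - A <= y 0 j <= s 0 j + q%:R.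
Proof.
rewrite /corners mem_undup => /mapP[v]; rewrite mem_filter => /andP[vH _] ->.
have [Xy [_ [_ near]]] := corner_ofP vH; split => // j.
have [yg gy] := near j; rewrite gridpt_coord in yg gy.
have N0 : (0 : R) < N%:R by rewrite ltr0n.
have vq : ((v j : nat)%:R + 1 <= q%:R * N%:R :> R).
  by rewrite -natrM natr1 ler_nat ltn_ord.
have kN0 : 0 <= (v j : nat)%:R / N%:R :> R := divr_ge0 (ler0n _ _) (ltW N0).
have kNq : ((v j : nat)%:R + 1) / N%:R <= q%:R :> R by rewrite ler_pdivrMr.
by apply/andP; split; lra.
Qed.

Hypotheses (C_le1 : C <= 1) (Hq : 9 * Num.max 1 A <= q%:R).
Hypothesis HN : Num.max (4 / A)
  (8 * (n.+1)%:R * n%:R * 2 ^+ n * D * A ^+ n.-1 / (3 * C ^+ n)) <= N%:R.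

Lemma q_gt0 : 0 < q%:R :> R.
Proof. by apply: lt_le_trans Hq; rewrite mulr_gt0 // lt_max ltr01. Qed.

Lemma count_Hbound_frac :
  (count in_Hbound (enum F))%:R <= ((q * N) ^ n)%:R / (4 * (n.+1)%:R) :> R.
Proof.
have [A0 _] := A1; have [C0 D0 _] := A2.
have N0 : (0 : R) < N%:R by rewrite ltr0n.
move: HN; rewrite ge_max => /andP[AN HN'].
have {}AN : 4 <= A * N%:R by rewrite ler_pdivrMr // mulrC in AN.
have [n0|n_gt0] := posnP n.
  have nT0 : (n * T ^ n.-1 = 0)%N by rewrite n0.
  by have := count_Hbound_le; rewrite nT0 muln0 leqn0 => /eqP ->; rewrite divr_ge0.
set K := (Num.truncn ((q%:R + A) / C)).+1.
have corners_le : (size corners)%:R <= (K ^ n)%:R * D.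
  apply: (size_Xhat_box_le A2 (a := \row_j (s 0 j - A))); first exact: undup_uniq.
  move=> y /corners_in_box[Xy yb]; split => // j; rewrite mxE.
  by have /andP[? ?] := yb j; apply/andP; split; lra.
have K_le : K%:R <= 11 / 9 * q%:R / C.
  apply: le_trans (cubes_per_side_le C0 C_le1 Hq); rewrite -natr1 lerD2r truncn_le.
  by rewrite divr_ge0 ?addr_ge0 ?ler0n ?ltW.
have T_le : T%:R <= 3 / 2 * A * N%:R.
  have : (Num.truncn (A * N%:R))%:R <= A * N%:R by rewrite truncn_le mulr_ge0 ?ltW.
  by rewrite -addn2 natrD => tAN; lra.
apply: le_trans (_ : (size corners)%:R * (n%:R * (T ^ n.-1)%:R) <= _).
  by rewrite -!natrM (ler_nat R) count_Hbound_le.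
apply: le_trans (_ : (K ^ n)%:R * D * (n%:R * (T ^ n.-1)%:R) <= _).
  by rewrite ler_wpM2r ?mulr_ge0.
have q0 := q_gt0.
rewrite !natrX natrM mulrA; apply: (corner_count_arith (A := A) (C := C)) => //.
- exact: ltW.
- by rewrite ler0n K_le.
- by rewrite ler0n T_le.
Qed.

Lemma cardG_out_Hbound_ratio : 1 - (4 * (n.+1)%:R)^-1 <=
  (cardG_out (Hbound B d fRep N) N q s)%:R / (cardG N q s)%:R :> R.
Proof.
have M0 : (0 : R) < ((q * N) ^ n)%:R.
  by rewrite natrX natrM exprn_gt0 // mulr_gt0 ?q_gt0 ?ltr0n.
have E : (cardG_out (Hbound B d fRep N) N q s + count in_Hbound (enum F))%N = ((q * N) ^ n)%N.
  exact: cardG_out_add_count.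
have -> : (cardG_out (Hbound B d fRep N) N q s)%:R =
    ((q * N) ^ n)%:R - (count in_Hbound (enum F))%:R :> R by rewrite -E natrD addrK.
rewrite cardG_eq // mulrBl divff ?gt_eqF // lerD2l lerN2.
by rewrite ler_pdivrMr // mulrC count_Hbound_frac.
Qed.

End Counting.

Theorem corollary5p2 (R : realType) (n : nat) (X : finType) (B : 'M[R]_n)
    (d : X -> 'rV[R]_n) (fRep : set (X * 'rV[R]_n)) (A C D : R)
    (N q L : nat) (eps : R) (s : 'rV[R]_n) :
  is_infrastructure B d fRep ->
  cornered B d fRep ->
  assumptionA1 B d fRep A ->
  assumptionA2 B d C D ->
  C <= 1 ->
  (1 <= N)%N -> (1 <= q)%N -> (1 <= L)%N ->
  0 < eps -> eps <= ((2 * N * L)%N%:R)^-1 ->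
  9 * Num.max 1 A <= q%:R ->
  Num.max (4 / A)
    (8 * (n.+1)%:R * n%:R * 2 ^+ n * D * A ^+ n.-1 / (3 * C ^+ n)) <= N%:R ->
  (exists w : 'I_n -> 'I_L, s = (((N * L)%N)%:R)^-1 *: (\row_i ((w i : nat)%:R))) ->
  Hgrid B d fRep N eps `&` Gset N q s = set0 ->
  (N%:R)^-1 <= A / 4 /\
  1 - (4 * (n.+1)%:R)^-1 <= (
    (cardG_out (Hbound B d fRep N) N q s)%:R / (cardG N q s)%:R :> R).
Proof.
move=> infra corn A1 A2 C_le1 N_gt0 _ _ _ _ Hq HN _ _.
split; last exact: cardG_out_Hbound_ratio s infra corn N_gt0 A1 A2 C_le1 Hq HN.
have [A0 _] := A1; have N0 : (0 : R) < N%:R by rewrite ltr0n.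
move: HN; rewrite ge_max => /andP[+ _].
by rewrite ler_pdivrMr // -(ler_pM2r N0) mulVf ?gt_eqF //; lra.
Qed.
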